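(* Let $G=(V,E)$ be a finite simple graph with no isolated vertices and no isolated edges, whose vertices operate independently, vertex $v$ with probability $p_v$, and let $q_v=1-p_v$, $\mathbf{p}=(p_v)_{v\in V}$. Let $A$ be any set of vertices of $G$ each of which is adjacent to a vertex of degree $1$. Then \[ \operatorname{DRel}(G,\mathbf{p})=\sum_{J\subseteq V\setminus A}(-1)^{|J|}\prod_{v\in N_G[J]}q_v. \]
   Context: $\operatorname{DRel}(G,\mathbf{p})$ is the probability that the set of operating vertices is a dominating set of $G$ (every vertex not in the set is adjacent to a vertex in it); edges never fail. $N_G[J]$ is the closed neighbourhood of $J$ (vertices in $J$ or adjacent to a vertex of $J$). An isolated edge is an edge both of whose endpoints have degree $1$. *)

(* A finite simple graph on a finType T is given by an
   adjacency relation e : rel T which is symmetric and irreflexive. *)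
From mathcomp Require Import all_boot all_order all_algebra.
Set Implicit Arguments. Unset Strict Implicit. Unset Printing Implicit Defensive.
Import Order.TTheory GRing.Theory Num.Theory.
Local Open Scope ring_scope.

Section Graph.
Variable T : finType.
Variable e : rel T.

Definition nbhd (v : T) : {set T} := [set u | e v u].
Definition deg (v : T) : nat := #|nbhd v|.

Definition closed_nbhd (J : {set T}) : {set T} :=
  [set u | (u \in J) || [exists w in J, e w u]].

Definition dominating (S : {set T}) : bool :=
  [forall v, (v \notin S) ==> [exists w in S, e v w]].

Definition DRel (R : numDomainType) (p : T -> R) : R :=
  \sum_(S : {set T} | dominating S)
     (\prod_(v in S) p v) * (\prod_(v in ~: S) (1 - p v)).
End Graph.

(** Inclusion–exclusion over the vertices left undominated gives
    DRel(G,p) = Σ_J (-1)^|J| Π_{v ∈ N[J]} q_v over all vertex sets J.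
    If a ∈ J has a leaf neighbour u, then N[u] = {u, a} ⊆ N[J \ u], so adding
    or removing u flips the sign of the term of J without changing N[J].
    Toggling the leaf of the first vertex of J ∩ A is therefore a
    sign-reversing involution on the sets J meeting A; it preserves J ∩ A
    because no leaf lies in A (a leaf adjacent to a leaf would be an
    isolated edge), so all these terms cancel. *)

From mathcomp Require Import all_boot all_order all_algebra.
Import GRing.Theory Num.Theory.
Set Implicit Arguments. Unset Strict Implicit.
Local Open Scope ring_scope.

Lemma sumr_sign_reversing (R : numDomainType) (I : finType) (P : pred I)
    (s : I -> I) (F : I -> R) :
  involutive s -> (forall i, P (s i) = P i) ->
  (forall i, P i -> F (s i) = - F i) ->
  \sum_(i | P i) F i = 0.
Proof.
move=> sK Ps Fs; set S := \sum_(i | P i) F i.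
have S_opp : S = - S.
  rewrite {1}/S (reindex_inj (inv_inj sK)) -sumrN; apply: eq_big => i.
    exact: Ps.
  by rewrite Ps; apply: Fs.
(* No fixed-point-freeness is needed: S = - S forces S = 0 in characteristic 0. *)
by apply/eqP; move/eqP: S_opp; rewrite -addr_eq0 -mulr2n mulrn_eq0.
Qed.

Section Toggle.
Variable T : finType.

Definition toggle (u : T) (J : {set T}) : {set T} :=
  if u \in J then J :\ u else u |: J.

Lemma toggleK u : involutive (toggle u).
Proof.
move=> J; rewrite /toggle; have [uJ|uJ] := boolP (u \in J).
  by rewrite setD11 setD1K.
by rewrite setU11 setU1K.
Qed.

Lemma toggleI u (A J : {set T}) : u \notin A -> toggle u J :&: A = J :&: A.
Proof.
move=> uA; apply/setP => x; rewrite /toggle; case: ifP => _; rewrite !inE;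
  by case: eqP => // ->; rewrite (negbTE uA) !andbF.
Qed.

End Toggle.

Section LeafCancellation.
Variables (R : numDomainType) (T : finType) (A : {set T}) (leaf : T -> T).
Variable F : {set T} -> R.
Hypothesis leaf_notin : {in A, forall a, leaf a \notin A}.
Hypothesis F_toggle_leaf :
  forall a (J : {set T}), a \in A -> a \in J -> F (toggle (leaf a) J) = - F J.

Definition toggle_first (J : {set T}) : {set T} :=
  if [pick a in J :&: A] is Some a then toggle (leaf a) J else J.

Lemma toggle_firstI J : toggle_first J :&: A = J :&: A.
Proof.
rewrite /toggle_first; case: pickP => // a; rewrite inE => /andP [_ aA].
exact/toggleI/leaf_notin.
Qed.

Lemma toggle_firstK : involutive toggle_first.
Proof.
move=> J; rewrite {1}/toggle_first toggle_firstI /toggle_first.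
by case: pickP => // a; rewrite toggleK.
Qed.

Lemma sum_subset_setC :
  \sum_(J : {set T}) F J = \sum_(J : {set T} | J \subset ~: A) F J.
Proof.
have subsetCE (J : {set T}) : (J \subset ~: A) = (J :&: A == set0).
  by rewrite -disjoints_subset setI_eq0.
rewrite [LHS](bigID (fun J : {set T} => J \subset ~: A)) /=.
rewrite [X in _ + X](sumr_sign_reversing toggle_firstK) ?addr0 // => J.
  by rewrite !subsetCE toggle_firstI.
rewrite subsetCE => /set0Pn [a0 a0JA]; rewrite /toggle_first.
case: pickP => [a|/(_ a0)]; last by rewrite a0JA.
by case/setIP => aJ aA; apply: F_toggle_leaf.
Qed.

End LeafCancellation.

Section InclusionExclusion.
Variables (R : numDomainType) (T : finType) (e : rel T) (p : T -> R).

Definition weight (S : {set T}) : R :=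
  \prod_v (if v \in S then p v else 1 - p v).

Lemma DRel_weight : DRel e p = \sum_(S | dominating e S) weight S.
Proof.
apply: eq_bigr => S _; rewrite /weight [RHS](bigID (mem S)) /=.
congr (_ * _); first by apply: eq_bigr => v ->.
by apply: eq_big => [v|v]; rewrite inE // => /negbTE ->.
Qed.

Lemma sum_weight_disjoint (X : {set T}) :
  \sum_(S : {set T} | [disjoint S & X]) weight S = \prod_(v in X) (1 - p v).
Proof.
transitivity (\prod_v ((if v \in X then 0 else p v) + (1 - p v))); last first.
  rewrite [LHS](bigID (mem X)) /= [X in _ * X]big1 ?mulr1.
    by apply: eq_bigr => v ->; rewrite add0r.
  by move=> v /negbTE ->; rewrite subrKC.
rewrite bigA_distr big_mkcond /=; apply: eq_bigr => S _.
case: (boolP [disjoint S & X]) => [SX|]; last first.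
  rewrite -setI_eq0 => /set0Pn [v /setIP [vS vX]].
  by rewrite (bigD1 v) //= vS vX mul0r.
by apply: eq_bigr => v _; case: ifP => // vS; rewrite (disjointFr SX vS).
Qed.

Lemma sum_sign_subset (U : {set T}) :
  \sum_(J : {set T} | J \subset U) (-1) ^+ #|J| = (U == set0)%:R :> R.
Proof.
transitivity (\prod_v ((if v \in U then -1 else 0) + 1) : R).
  rewrite bigA_distr [LHS]big_mkcond /=; apply: eq_bigr => J _.
  case: (boolP (J \subset U)) => [JU|/subsetPn [v vJ vU]]; last first.
    by rewrite (bigD1 v) //= vJ (negbTE vU) mul0r.
  rewrite (bigID (mem J)) /= [X in _ = _ * X]big1 ?mulr1 => [|v /negbTE -> //].
  by rewrite -prodr_const; apply: eq_bigr => v vJ; rewrite vJ (subsetP JU).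
have [->|[u uU]] := set_0Vmem U.
  by rewrite eqxx big1 // => v _; rewrite inE add0r.
have /negbTE -> : U != set0 by apply/set0Pn; exists u.
by rewrite (bigD1 u) //= uU addNr mul0r.
Qed.

Definition undominated (S : {set T}) : {set T} :=
  [set v | (v \notin S) && ~~ [exists w in S, e v w]].

Lemma dominatingE (S : {set T}) : dominating e S = (undominated S == set0).
Proof.
apply/forallP/eqP => [dom|undom0 v].
  apply/setP => v; rewrite !inE; apply/negbTE.
  by apply/negP => /andP [/(implyP (dom v)) ->].
apply/implyP => vS; apply: contraT => undom.
by move/setP: undom0 => /(_ v); rewrite !inE vS undom.
Qed.

Lemma subset_undominated (S J : {set T}) :
  (J \subset undominated S) = [disjoint closed_nbhd e J & S].
Proof.
rewrite -setI_eq0; apply/subsetP/eqP => [JS|JS0 v vJ].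
  apply/setP => u; rewrite !inE; apply/negbTE/andP => -[/orP uJ uS].
  case: uJ => [/JS|/existsP [w /andP [wJ ewu]]].
    by rewrite inE uS.
  by move: (JS w wJ); rewrite inE => /andP [_ /existsP []]; exists u; rewrite uS.
rewrite inE; apply/andP; split.
  by apply/negP => vS; move/setP/(_ v): JS0; rewrite !inE vJ vS.
apply/existsP => -[u /andP [uS evu]]; move/setP/(_ u): JS0.
rewrite !inE uS andbT => /negbT/negP; apply.
by apply/orP; right; apply/existsP; exists v; rewrite vJ.
Qed.

Definition ie_term (J : {set T}) : R :=
  (-1) ^+ #|J| * \prod_(v in closed_nbhd e J) (1 - p v).

Theorem DRel_incl_excl : DRel e p = \sum_(J : {set T}) ie_term J.
Proof.
transitivity (\sum_(S : {set T}) \sum_(J : {set T})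
    (if [disjoint closed_nbhd e J & S] then (-1) ^+ #|J| * weight S else 0)).
  rewrite DRel_weight big_mkcond /=; apply: eq_bigr => S _.
  transitivity ((undominated S == set0)%:R * weight S).
    by rewrite dominatingE; case: eqP; rewrite ?mul1r ?mul0r.
  rewrite -sum_sign_subset mulr_suml big_mkcond /=; apply: eq_bigr => J _.
  by rewrite subset_undominated; case: ifP.
rewrite exchange_big /=; apply: eq_bigr => J _.
rewrite /ie_term -sum_weight_disjoint mulr_sumr [RHS]big_mkcond /=.
by apply: eq_bigr => S _; rewrite disjoint_sym; case: ifP.
Qed.

End InclusionExclusion.

Section Graph.
Variables (T : finType) (e : rel T).

Lemma closed_nbhdU (J K : {set T}) :
  closed_nbhd e (J :|: K) = closed_nbhd e J :|: closed_nbhd e K.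
Proof.
have existsU u : [exists w in J :|: K, e w u] =
    [exists w in J, e w u] || [exists w in K, e w u].
  apply/existsP/orP => [[w /andP [/setUP [wJ|wK] ewu]]|[]/existsP [w /andP [wX ewu]]].
  - by left; apply/existsP; exists w; rewrite wJ.
  - by right; apply/existsP; exists w; rewrite wK.
  - by exists w; rewrite inE wX.
  - by exists w; rewrite inE wX orbT.
by apply/setP => u; rewrite !inE existsU orbACA.
Qed.

Lemma closed_nbhd1 (u : T) : closed_nbhd e [set u] = u |: nbhd e u.
Proof.
apply/setP => v; rewrite !inE; congr (_ || _).
by apply/existsP/idP => [[w /andP [/set1P -> //]]|euv]; exists u; rewrite inE eqxx.
Qed.

Lemma closed_nbhdU1 (u : T) (K : {set T}) :
  closed_nbhd e [set u] \subset closed_nbhd e K ->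
  closed_nbhd e (u |: K) = closed_nbhd e K.
Proof. by move=> /setUidPr Nu_sub; rewrite closed_nbhdU. Qed.

Lemma ie_term_toggle (R : numDomainType) (p : T -> R) (u : T) (J : {set T}) :
  closed_nbhd e [set u] \subset closed_nbhd e (J :\ u) ->
  ie_term e p (toggle u J) = - ie_term e p J.
Proof.
move=> Nu_sub; set K := J :\ u.
have uK : u \notin K by rewrite setD11.
have ie_term_addu : ie_term e p (u |: K) = - ie_term e p K.
  by rewrite /ie_term closed_nbhdU1 // cardsU1 uK exprS mulN1r mulNr.
rewrite /toggle; case: ifP => uJ.
  by rewrite -[in RHS](setD1K uJ) ie_term_addu opprK.
have KJ : K = J by apply/setP => v; rewrite !inE; case: eqP => // ->; rewrite uJ.
by rewrite -KJ ie_term_addu.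
Qed.

Lemma nbhd_leaf (u a : T) : deg e u = 1%N -> e u a -> nbhd e u = [set a].
Proof.
move=> /eqP /cards1P [w Nu] eua; rewrite Nu; congr [set _].
by apply/esym/set1P; rewrite -Nu inE.
Qed.

Definition leaf_of (a : T) : T :=
  odflt a [pick u | e a u && (deg e u == 1%N)].

Lemma leaf_ofP (a : T) :
  (exists u, e a u /\ deg e u = 1%N) ->
  e a (leaf_of a) /\ deg e (leaf_of a) = 1%N.
Proof.
move=> [u [eau du]]; rewrite /leaf_of; case: pickP => [w /andP [eaw /eqP //]|].
by move=> /(_ u); rewrite eau du eqxx.
Qed.

Hypotheses (e_sym : symmetric e) (e_irr : irreflexive e).

Lemma ie_term_toggle_leaf (R : numDomainType) (p : T -> R) (a u : T)
    (J : {set T}) :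
  e a u -> deg e u = 1%N -> a \in J ->
  ie_term e p (toggle u J) = - ie_term e p J.
Proof.
move=> eau du aJ; apply: ie_term_toggle.
have aK : a \in J :\ u.
  by rewrite !inE aJ andbT; apply: contraTneq eau => ->; rewrite e_irr.
have eua : e u a by rewrite e_sym.
rewrite closed_nbhd1 (nbhd_leaf du eua).
apply/subsetP => v /setU1P [->|/set1P ->]; rewrite inE; last by rewrite aK.
by apply/orP; right; apply/existsP; exists a; rewrite aK.
Qed.

Lemma leaf_not_support (a u : T) :
  (forall v w, e v w -> ~ (deg e v = 1%N /\ deg e w = 1%N)) ->
  e a u -> deg e u = 1%N -> ~ exists w, e u w /\ deg e w = 1%N.
Proof.
move=> no_isolated_edge eau du [w [euw dw]].
have eua : e u a by rewrite e_sym.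
have wa : w = a by apply/set1P; rewrite -(nbhd_leaf du eua) inE.
by apply: (no_isolated_edge a u eau); rewrite -wa.
Qed.

End Graph.

Theorem corollary3 (R : realFieldType) (T : finType) (e : rel T)
    (e_sym : symmetric e) (e_irr : irreflexive e)
    (no_isolated_vertex : forall v : T, (0 < deg e v)%N)
    (no_isolated_edge : forall u v : T, e u v -> ~ (deg e u = 1%N /\ deg e v = 1%N))
    (p : T -> R) (p_ge0 : forall v, 0 <= p v) (p_le1 : forall v, p v <= 1)
    (A : {set T})
    (hA : forall a, a \in A -> exists u, e a u /\ deg e u = 1%N) :
  DRel e p =
    \sum_(J : {set T} | J \subset ~: A)
       (-1) ^+ #|J| * \prod_(v in closed_nbhd e J) (1 - p v).
Proof.
have leafA a : a \in A -> e a (leaf_of e a) /\ deg e (leaf_of e a) = 1%N.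
  by move/hA/leaf_ofP.
rewrite DRel_incl_excl; apply: (sum_subset_setC (leaf := leaf_of e)) => [a|a J].
  by move=> /leafA [eau du]; apply/negP => /hA; apply: leaf_not_support eau du.
by move=> /leafA [eau du] aJ; apply: ie_term_toggle_leaf eau du aJ.
Qed.
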